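(* Suppose that $\rho\ge2$ and $\rho=t-\Theta(1)$. Then $y_t(\rho)=\log(t2^t)+O(1)$. Explicitly: for all constants $C>c>0$ there is $K$ such that for every positive integer $t$ and real $\rho\ge2$ with $c<t-\rho<C$, we have $|y_t(\rho)-\log(t2^t)|\le K$.
   Context: $d_i=2^{\binom i2}i!$. For positive integer $t$ and real $1<\rho<t$, $x_t(\rho),y_t(\rho)$ are the unique reals $x,y$ with $\sum_{i=1}^t e^{x+iy}d_i^{-1}=1$ and $\sum_{i=1}^t ie^{x+iy}d_i^{-1}=\rho$. Logarithms are natural. *)

From Stdlib Require Import Reals Lra Lia Factorial ClassicalEpsilon.
Open Scope R_scope.

Definition d (i : nat) : R := 2 ^ (Nat.div (i * (i - 1)) 2) * INR (fact i).

Fixpoint sum1 (t : nat) (f : nat -> R) : R :=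
  match t with
  | O => 0
  | S t' => sum1 t' f + f t
  end.

Definition xy_eqs (t : nat) (rho x y : R) : Prop :=
  sum1 t (fun i => exp (x + INR i * y) / d i) = 1 /\
  sum1 t (fun i => INR i * exp (x + INR i * y) / d i) = rho.

(* (x_t(rho), y_t(rho)): the (unique, for 1 < rho < t) solution, chosen by
   Hilbert's epsilon. *)
Definition xy_t (t : nat) (rho : R) : R * R :=
  epsilon (inhabits (0, 0)) (fun p => xy_eqs t rho (fst p) (snd p)).

Definition x_t (t : nat) (rho : R) : R := fst (xy_t t rho).
Definition y_t (t : nat) (rho : R) : R := snd (xy_t t rho).

(** With weights [w_i = exp (x + i y) / d_i], consecutive weights have ratio
    [w_(i+1) / w_i = exp y / (2^i (i+1))], and the second equation says that the
    mean of [i] under [w] is [rho].  If [exp y] exceeds [t 2^t] by a large constant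
    factor, the weights grow geometrically up to [i = t], so the mean is within a
    small constant of [t]; if [exp y] is below [t 2^t] by a large constant factor,
    the weights decay geometrically over the last [C + 2] indices, so the mean is
    below [t - C] (or, for small [t], below [2]).  Since [c < t - rho < C], both
    cases are excluded, which pins [y] to [ln (t 2^t)] up to an additive constant. *)

From Stdlib Require Import Reals Lra Lia Psatz Factorial ClassicalEpsilon.
Open Scope R_scope.

Lemma sum1_ext n f g : (forall i, f i = g i) -> sum1 n f = sum1 n g.
Proof. intros H; induction n; simpl; [reflexivity | rewrite IHn, H; reflexivity]. Qed.

Lemma sum1_S n f : sum1 (S n) f = sum1 n f + f (S n).
Proof. reflexivity. Qed.

Lemma sum1_lin n a b f g :
  sum1 n (fun i => a * f i + b * g i) = a * sum1 n f + b * sum1 n g.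
Proof. induction n; simpl; [ring | rewrite IHn; ring]. Qed.

Lemma sum1_affine n a b f :
  sum1 n (fun i => (a + b * INR i) * f i)
  = a * sum1 n f + b * sum1 n (fun i => INR i * f i).
Proof.
  rewrite <- sum1_lin. apply sum1_ext; intros; ring.
Qed.

Lemma sum1_scal n a f : sum1 n (fun i => a * f i) = a * sum1 n f.
Proof. induction n; simpl; [ring | rewrite IHn; ring]. Qed.

Lemma sum1_nonneg n f : (forall i, 0 <= f i) -> 0 <= sum1 n f.
Proof. intros H; induction n; simpl; [lra | specialize (H (S n)); lra]. Qed.

Lemma sum1_ge_term n f i :
  (forall j, 0 <= f j) -> (1 <= i <= n)%nat -> f i <= sum1 n f.
Proof.
  intros H Hi; induction n as [|n IH]; [lia |]; simpl.
  destruct (Nat.eq_dec i (S n)) as [-> | Hne].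
  - pose proof (sum1_nonneg n f H); lra.
  - specialize (IH ltac:(lia)); specialize (H (S n)); lra.
Qed.

Lemma sum1_pos n f : (forall i, 0 < f i) -> (1 <= n)%nat -> 0 < sum1 n f.
Proof.
  intros H Hn.
  assert (f n <= sum1 n f) by (apply sum1_ge_term; [intros; apply Rlt_le, H | lia]).
  specialize (H n); lra.
Qed.

Lemma continuity_sum1 n (f : nat -> R -> R) :
  (forall i, continuity (f i)) -> continuity (fun y => sum1 n (fun i => f i y)).
Proof.
  intros H; induction n; simpl.
  - apply continuity_const; intros a b; reflexivity.
  - apply (continuity_plus (fun y => sum1 n (fun i => f i y)) (f (S n))); auto.
Qed.

Section PositiveWeights.

Variable w : nat -> R.
Hypothesis w_pos : forall i, 0 < w i.

Lemma moment_lt_twice_mass_of_decay t :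
  (forall i, (1 <= i)%nat -> 4 * w (S i) <= w i) -> (1 <= t)%nat ->
  sum1 t (fun i => INR i * w i) < 2 * sum1 t w.
Proof.
  intros Hdecay Ht.
  assert (Hinv : forall n, (1 <= n)%nat ->
            sum1 n (fun i => (-2 + 1 * INR i) * w i) + INR n * w n <= 0).
  { intros n Hn; induction Hn as [|n Hn IH]; [simpl; lra |].
    rewrite sum1_S; rewrite S_INR.
    specialize (Hdecay n Hn).
    assert (1 <= INR n) by (apply (le_INR 1); lia).
    pose proof (w_pos n); pose proof (w_pos (S n)); nra. }
  specialize (Hinv t Ht); rewrite sum1_affine in Hinv.
  assert (0 < INR t * w t) by (apply Rmult_lt_0_compat; [apply lt_0_INR; lia | auto]).
  lra.
Qed.

Lemma deficit_le_of_growth t q :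
  0 <= q <= / 4 -> (forall i, (i < t)%nat -> w i <= q * w (S i)) -> (1 <= t)%nat ->
  INR t * sum1 t w - sum1 t (fun i => INR i * w i) <= 2 * q * sum1 t w.
Proof.
  intros Hq Hgrowth Ht.
  assert (Hinv : forall n, (n < t)%nat ->
            sum1 n (fun i => (INR t + -1 * INR i) * w i)
            <= 2 * q * (INR t - INR n) * w (S n)).
  { induction n as [|n IH]; intros Hn.
    - apply Rmult_le_pos; [| apply Rlt_le, w_pos].
      simpl; pose proof (pos_INR t); nra.
    - specialize (IH ltac:(lia)); specialize (Hgrowth (S n) Hn).
      rewrite sum1_S; rewrite S_INR in *.
      assert (2 <= INR t - INR n) by (rewrite <- minus_INR by lia;
                                       apply (le_INR 2); lia).
      pose proof (w_pos (S n)); pose proof (w_pos (S (S n))).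
      assert (Hc : 0 <= 2 * q * (INR t - INR n) + (INR t - INR n - 1)) by nra.
      assert ((2 * q * (INR t - INR n) + (INR t - INR n - 1)) * w (S n)
              <= (2 * q * (INR t - INR n) + (INR t - INR n - 1)) * (q * w (S (S n))))
        by (apply Rmult_le_compat_l; lra).
      assert (Hneg : 2 * q * (INR t - INR n) - (INR t - INR n) + 1 <= 0) by nra.
      assert (0 <= q * w (S (S n)) * - (2 * q * (INR t - INR n) - (INR t - INR n) + 1))
        by (apply Rmult_le_pos; [apply Rmult_le_pos |]; lra).
      nra. }
  destruct t as [|t]; [lia |].
  specialize (Hinv t ltac:(lia)).
  assert (Hlast : sum1 (S t) (fun i => (INR (S t) + -1 * INR i) * w i)
                  = sum1 t (fun i => (INR (S t) + -1 * INR i) * w i)) by (simpl; ring).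
  rewrite sum1_affine in Hlast; rewrite S_INR in Hinv |- *.
  replace (2 * q * (INR t + 1 - INR t)) with (2 * q) in Hinv by ring.
  assert (w (S t) <= sum1 (S t) w) by (apply sum1_ge_term; [intros; apply Rlt_le, w_pos | lia]).
  rewrite S_INR in Hlast; nra.
Qed.

Lemma deficit_pos_of_decay_near_top t C :
  0 <= C -> C + 2 <= INR t ->
  (forall i, (1 <= i)%nat -> (S i <= t)%nat -> INR t - INR (S i) - C < 1 ->
     (1 + C) * w (S i) <= w i) ->
  0 < (INR t - C) * sum1 t w - sum1 t (fun i => INR i * w i).
Proof.
  intros HC Ht Hdecay.
  assert (Ht1 : (1 <= t)%nat) by (apply (INR_le 1); simpl; lra).
  assert (Hinv : forall n, (1 <= n <= t)%nat ->
            w n <= sum1 n (fun i => ((INR t - C) + -1 * INR i) * w i)).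
  { intros n [Hn Hnt]; induction Hn as [|n Hn IH]; [simpl; pose proof (w_pos 1); nra |].
    specialize (IH ltac:(lia)); rewrite sum1_S.
    assert (INR (S n) <= INR t) by (apply le_INR; lia).
    pose proof (w_pos n); pose proof (w_pos (S n)).
    destruct (Rlt_dec (INR t - INR (S n) - C) 1) as [Hlt | Hge].
    - specialize (Hdecay n Hn Hnt Hlt); nra.
    - nra. }
  specialize (Hinv t ltac:(lia)); rewrite sum1_affine in Hinv.
  pose proof (w_pos t); lra.
Qed.

End PositiveWeights.

Definition W (x y : R) (i : nat) : R := exp (x + INR i * y) / d i.

Lemma d_pos i : 0 < d i.
Proof.
  unfold d; apply Rmult_lt_0_compat; [apply pow_lt; lra | apply lt_0_INR, lt_O_fact].
Qed.

Lemma d_S k : d (S k) = d k * (2 ^ k * INR (S k)).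
Proof.
  unfold d.
  assert (Hbin : Nat.div (S k * (S k - 1)) 2 = (Nat.div (k * (k - 1)) 2 + k)%nat).
  { replace (S k * (S k - 1))%nat with (k * (k - 1) + k * 2)%nat
      by (destruct k; simpl; lia).
    apply Nat.div_add; lia. }
  rewrite Hbin, pow_add, fact_simpl, mult_INR; ring.
Qed.

Lemma W_pos x y i : 0 < W x y i.
Proof. apply Rdiv_lt_0_compat; [apply exp_pos | apply d_pos]. Qed.

Lemma W_shift x y i : W x y i = exp x * W 0 y i.
Proof. unfold W; rewrite Rplus_0_l, exp_plus; unfold Rdiv; ring. Qed.

Lemma W_succ x y k : W x y (S k) * (2 ^ k * INR (S k)) = exp y * W x y k.
Proof.
  unfold W; rewrite d_S, S_INR.
  replace (x + (INR k + 1) * y) with (x + INR k * y + y) by ring.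
  rewrite exp_plus.
  pose proof (d_pos k); pose proof (pow_lt 2 k ltac:(lra)); pose proof (pos_INR k).
  field; repeat split; lra.
Qed.

Lemma W_decay x y i : exp y <= 1 -> (1 <= i)%nat -> 4 * W x y (S i) <= W x y i.
Proof.
  intros Hy Hi.
  pose proof (W_succ x y i); pose proof (W_pos x y i); pose proof (W_pos x y (S i)).
  assert (2 ^ 1 <= 2 ^ i) by (apply Rle_pow; [lra | lia]).
  assert (2 <= INR (S i)) by (apply (le_INR 2); lia).
  assert (4 <= 2 ^ i * INR (S i)) by (simpl in *; nra).
  assert (W x y (S i) * 4 <= W x y (S i) * (2 ^ i * INR (S i)))
    by (apply Rmult_le_compat_l; lra).
  assert (exp y * W x y i <= W x y i) by nra.
  lra.
Qed.

Lemma W_growth x y t q i :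
  (i < t)%nat -> INR t * 2 ^ t <= 2 * q * exp y -> W x y i <= q * W x y (S i).
Proof.
  intros Hi Hy.
  pose proof (W_succ x y i); pose proof (W_pos x y i); pose proof (W_pos x y (S i)).
  pose proof (exp_pos y).
  assert (2 * 2 ^ i <= 2 ^ t)
    by (change (2 * 2 ^ i) with (2 ^ S i); apply Rle_pow; [lra | lia]).
  assert (INR (S i) <= INR t) by (apply le_INR; lia).
  assert (0 < 2 ^ i) by (apply pow_lt; lra).
  assert (0 < INR (S i)) by (apply lt_0_INR; lia).
  assert (2 * 2 ^ i * INR (S i) <= 2 ^ t * INR t)
    by (apply Rmult_le_compat; lra).
  assert (W x y (S i) * (2 * (2 ^ i * INR (S i))) <= W x y (S i) * (2 * q * exp y))
    by (apply Rmult_le_compat_l; lra).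
  apply (Rmult_le_reg_l (exp y)); nra.
Qed.

Lemma W_decay_near_top x y t C N i :
  0 <= C -> C + 2 <= INR N -> (1 + C) * exp y * (2 ^ N * INR N) <= INR t * 2 ^ t ->
  (1 <= i)%nat -> INR t - INR (S i) - C < 1 -> (1 + C) * W x y (S i) <= W x y i.
Proof.
  intros HC HN Hy Hi Htop.
  rewrite S_INR in Htop.
  assert (HN1 : (1 <= N)%nat) by (apply (INR_le 1); simpl; lra).
  assert (Hti : (t < i + N)%nat) by (apply INR_lt; rewrite plus_INR; lra).
  assert (H2 : 2 ^ t <= 2 ^ N * 2 ^ i) by (rewrite <- pow_add; apply Rle_pow; [lra | lia]).
  assert (HtN : INR t <= INR N * INR (S i)) by (rewrite <- mult_INR; apply le_INR; nia).
  pose proof (pow_lt 2 i ltac:(lra)); pose proof (pow_lt 2 N ltac:(lra)).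
  assert (0 < INR (S i)) by (apply lt_0_INR; lia).
  pose proof (pos_INR t); pose proof (pow_lt 2 t ltac:(lra)).
  assert (INR t * 2 ^ t <= (2 ^ N * INR N) * (2 ^ i * INR (S i)))
    by (replace ((2 ^ N * INR N) * (2 ^ i * INR (S i)))
          with ((INR N * INR (S i)) * (2 ^ N * 2 ^ i)) by ring;
        apply Rmult_le_compat; lra).
  assert (0 < INR N) by lra.
  assert (Hratio : (1 + C) * exp y <= 2 ^ i * INR (S i))
    by (apply (Rmult_le_reg_r (2 ^ N * INR N)); nra).
  pose proof (W_succ x y i); pose proof (W_pos x y i).
  assert (W x y i * ((1 + C) * exp y) <= W x y i * (2 ^ i * INR (S i)))
    by (apply Rmult_le_compat_l; lra).
  apply (Rmult_le_reg_r (2 ^ i * INR (S i))); nra.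
Qed.

Lemma xy_eqs_iff t rho x y :
  xy_eqs t rho x y <->
  sum1 t (W x y) = 1 /\ sum1 t (fun i => INR i * W x y i) = rho.
Proof.
  assert (E : sum1 t (fun i => INR i * exp (x + INR i * y) / d i)
              = sum1 t (fun i => INR i * W x y i))
    by (apply sum1_ext; intros; unfold W, Rdiv; ring).
  unfold xy_eqs; rewrite E; reflexivity.
Qed.

Lemma xy_eqs_normalize t rho z :
  (1 <= t)%nat ->
  sum1 t (fun i => INR i * W 0 z i) = rho * sum1 t (W 0 z) ->
  xy_eqs t rho (- ln (sum1 t (W 0 z))) z.
Proof.
  intros Ht Hbal; set (S := sum1 t (W 0 z)) in *.
  assert (HS : 0 < S) by (apply sum1_pos; [apply W_pos | exact Ht]).
  assert (Hnorm : forall i, W (- ln S) z i = / S * W 0 z i)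
    by (intros; rewrite W_shift, exp_Ropp, exp_ln; auto).
  apply xy_eqs_iff; split.
  - rewrite (sum1_ext t _ _ Hnorm), sum1_scal; fold S; field; lra.
  - rewrite (sum1_ext t _ (fun i => / S * (INR i * W 0 z i)))
      by (intros; rewrite Hnorm; ring).
    rewrite sum1_scal, Hbal; field; lra.
Qed.

Lemma balanced_exponent_exists t rho :
  (1 <= t)%nat -> 2 <= rho < INR t ->
  exists z, sum1 t (fun i => INR i * W 0 z i) = rho * sum1 t (W 0 z).
Proof.
  intros Ht [Hrho Hrt].
  set (g := fun y => sum1 t (fun i => (- rho + 1 * INR i) * W 0 y i)).
  assert (Hg : forall y,
            g y = - rho * sum1 t (W 0 y) + 1 * sum1 t (fun i => INR i * W 0 y i))
    by (intros; apply sum1_affine).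
  assert (Hcont : continuity g).
  { apply (continuity_sum1 t (fun i y => (- rho + 1 * INR i) * W 0 y i)); intros i.
    apply derivable_continuous; unfold W; pose proof (d_pos i); reg. }
  set (q := / 4 * Rmin 1 (INR t - rho)).
  assert (Hq : 0 < q <= / 4)
    by (pose proof (Rmin_l 1 (INR t - rho));
        assert (0 < Rmin 1 (INR t - rho)) by (apply Rmin_glb_lt; lra); unfold q; lra).
  assert (Hqt : 2 * q < INR t - rho) by (pose proof (Rmin_r 1 (INR t - rho)); unfold q; lra).
  set (B := INR t * 2 ^ t / (2 * q)).
  assert (HB : 1 < B).
  { assert (1 <= INR t) by (apply (le_INR 1); lia).
    assert (1 <= 2 ^ t) by (apply pow_R1_Rle; lra).
    unfold B; apply (Rmult_lt_reg_r (2 * q)); [lra |].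
    field_simplify; nra. }
  assert (Hg0 : g 0 < 0).
  { rewrite Hg.
    pose proof (moment_lt_twice_mass_of_decay (W 0 0) (W_pos 0 0) t
                  (fun i => W_decay 0 0 i ltac:(rewrite exp_0; lra)) Ht).
    pose proof (sum1_pos t (W 0 0) (W_pos 0 0) Ht); nra. }
  assert (Hgy : 0 < g (ln B)).
  { rewrite Hg.
    assert (HexpB : INR t * 2 ^ t <= 2 * q * exp (ln B))
      by (rewrite exp_ln by lra; unfold B; field_simplify; lra).
    pose proof (deficit_le_of_growth (W 0 (ln B)) (W_pos 0 (ln B)) t q ltac:(lra)
                  (fun i Hi => W_growth 0 (ln B) t q i Hi HexpB) Ht).
    pose proof (sum1_pos t (W 0 (ln B)) (W_pos 0 (ln B)) Ht); nra. }
  assert (HlnB : 0 < ln B) by (rewrite <- ln_1; apply ln_increasing; lra).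
  destruct (IVT g 0 (ln B) Hcont HlnB Hg0 Hgy) as [z [_ Hz]].
  exists z; rewrite Hg in Hz; lra.
Qed.

Lemma xy_eqs_solvable t rho :
  (1 <= t)%nat -> 2 <= rho < INR t -> exists p : R * R, xy_eqs t rho (fst p) (snd p).
Proof.
  intros Ht Hrho.
  destruct (balanced_exponent_exists t rho Ht Hrho) as [z Hz].
  exists (- ln (sum1 t (W 0 z)), z); exact (xy_eqs_normalize t rho z Ht Hz).
Qed.

Lemma y_t_moments t rho :
  (1 <= t)%nat -> 2 <= rho < INR t ->
  sum1 t (W (x_t t rho) (y_t t rho)) = 1 /\
  sum1 t (fun i => INR i * W (x_t t rho) (y_t t rho) i) = rho.
Proof.
  intros Ht Hrho; apply xy_eqs_iff.
  exact (epsilon_spec (inhabits (0, 0)) (fun p => xy_eqs t rho (fst p) (snd p))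
           (xy_eqs_solvable t rho Ht Hrho)).
Qed.

Lemma exp_lt_of_moments x y t rho q :
  (1 <= t)%nat -> 0 < q <= / 4 -> 2 * q < INR t - rho ->
  sum1 t (W x y) = 1 -> sum1 t (fun i => INR i * W x y i) = rho ->
  2 * q * exp y < INR t * 2 ^ t.
Proof.
  intros Ht Hq Hgap H0 H1.
  apply Rnot_le_lt; intros Hy.
  pose proof (deficit_le_of_growth (W x y) (W_pos x y) t q ltac:(lra)
                (fun i Hi => W_growth x y t q i Hi Hy) Ht).
  rewrite H0, H1 in *; lra.
Qed.

Lemma exp_gt_of_moments x y t rho C N :
  (1 <= t)%nat -> 2 <= rho -> 0 <= C -> C + 2 <= INR N -> INR t - rho < C ->
  sum1 t (W x y) = 1 -> sum1 t (fun i => INR i * W x y i) = rho ->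
  INR t * 2 ^ t < (1 + C) * (2 ^ N * INR N) * exp y.
Proof.
  intros Ht Hrho HC HN Hgap H0 H1.
  apply Rnot_le_lt; intros Hy.
  destruct (Rle_lt_dec (C + 2) (INR t)) as [Htbig | Htsmall].
  - pose proof (deficit_pos_of_decay_near_top (W x y) (W_pos x y) t C HC Htbig
                  (fun i Hi _ Htop => W_decay_near_top x y t C N i HC HN
                                        ltac:(lra) Hi Htop)).
    rewrite H0, H1 in *; lra.
  - (* For small [t] the weights decay from the start, so the mean is below 2. *)
    assert (HtN : (t <= N)%nat) by (apply INR_le; lra).
    assert (INR t * 2 ^ t <= INR N * 2 ^ N)
      by (apply Rmult_le_compat; [apply pos_INR | apply pow_le; lra |
                                  apply le_INR; lia | apply Rle_pow; [lra | lia]]).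
    pose proof (pow_lt 2 N ltac:(lra)); pose proof (lt_0_INR N ltac:(lia)).
    assert ((1 + C) * exp y <= 1) by (apply (Rmult_le_reg_r (2 ^ N * INR N)); nra).
    assert (Hy1 : exp y <= 1) by (pose proof (exp_pos y); nra).
    pose proof (moment_lt_twice_mass_of_decay (W x y) (W_pos x y) t
                  (fun i => W_decay x y i Hy1) Ht).
    rewrite H0, H1 in *; lra.
Qed.

Lemma Rabs_sub_ln_le y L a b :
  0 < a -> 0 < b -> a * exp y < L -> L < b * exp y ->
  Rabs (y - ln L) <= Rmax (- ln a) (ln b).
Proof.
  intros Ha Hb Hlo Hhi.
  pose proof (exp_pos y).
  assert (ln a + y < ln L)
    by (rewrite <- (ln_exp y); rewrite <- ln_mult by lra;
        apply ln_increasing; nra).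
  assert (ln L < ln b + y)
    by (rewrite <- (ln_exp y); rewrite <- ln_mult by lra;
        apply ln_increasing; nra).
  pose proof (Rmax_l (- ln a) (ln b)); pose proof (Rmax_r (- ln a) (ln b)).
  apply Rabs_le; lra.
Qed.

Theorem lemma36 :
  forall c C : R, 0 < c -> c < C ->
  exists K : R,
    forall (t : nat) (rho : R),
      (1 <= t)%nat -> 2 <= rho -> c < INR t - rho < C ->
      Rabs (y_t t rho - ln (INR t * 2 ^ t)) <= K.
Proof.
  intros c C Hc HcC.
  destruct (INR_archimed 1 (C + 2)) as [N HN]; [lra |]; rewrite Rmult_1_r in HN.
  set (q := Rmin (/ 4) (c / 2)).
  assert (Hq : 0 < q <= / 4)
    by (split; [apply Rmin_glb_lt; lra | apply Rmin_l]).
  assert (Hqc : 2 * q <= c) by (pose proof (Rmin_r (/ 4) (c / 2)); unfold q; lra).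
  set (D := (1 + C) * (2 ^ N * INR N)).
  assert (HD : 0 < D)
    by (unfold D; apply Rmult_lt_0_compat; [| apply Rmult_lt_0_compat; [apply pow_lt |]]; lra).
  exists (Rmax (- ln (2 * q)) (ln D)).
  intros t rho Ht Hrho [Hlo Hhi].
  destruct (y_t_moments t rho Ht ltac:(lra)) as [H0 H1].
  apply Rabs_sub_ln_le; [lra | exact HD | |].
  - apply (exp_lt_of_moments _ _ t rho q Ht Hq ltac:(lra) H0 H1).
  - apply (exp_gt_of_moments _ _ t rho C N Ht Hrho ltac:(lra) ltac:(lra) Hhi H0 H1).
Qed.
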